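(* Let $A$ be a synaptic algebra, let $p,q\in P$ be in generic position ($p\wedge q=p\wedge q^{\perp}=p^{\perp}\wedge q=p^{\perp}\wedge q^{\perp}=0$), and let $c:=(pqp+p^{\perp}q^{\perp}p^{\perp})^{1/2}$. Then the spectrum of $p+q$ is $\sigma(p+q)=\{1\pm\gamma:\gamma\in\sigma(c)\}$.
   Context: Synaptic algebra (Foulis): $R$ is a real linear associative algebra with unit $1$, and $A\subseteq R$ is a real linear subspace with $1\in A$. For $a,b\in A$ write $aCb$ iff $ab=ba$; $C(a):=\{b\in A: aCb\}$; $CC(a):=\{b\in A: bCd \text{ for all } d\in C(a)\}$. $A$ is a synaptic algebra with enveloping algebra $R$ iff: (SA1) $A$ is a partially ordered archimedean real linear space with positive cone $A^+$, $1$ is an order unit, $\|\cdot\|$ the order-unit norm; (SA2) $a\in A\Rightarrow a^2\in A^+$; (SA3) $a,b\in A^+\Rightarrow aba\in A^+$; (SA4) if $a\in A$, $b\in A^+$, $aba=0$ then $ab=ba=0$; (SA5) if $a\in A^+$ there is $b\in A^+\cap CC(a)$ with $b^2=a$; (SA6) for $a\in A$ there is $p=p^2\in A$ with $ab=0\Leftrightarrow pb=0$ for all $b\in A$; (SA7) if $1\le a$ there is $b\in A$ with $ab=ba=1$; (SA8) if $a,b\in A$, $a_1\le a_2\le\cdots$ are pairwise commuting elements of $C(b)$ with $\|a-a_n\|\to0$, then $a\in C(b)$. $A$ is nondegenerate. $P:=\{p\in A:p=p^2\}$ with inherited order is an orthomodular lattice with $p^{\perp}:=1-p$, meet $\wedge$,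 join $\vee$. For $0\le a$, $a^{1/2}$ is its unique positive square root in $A$. Real numbers $\lambda$ are identified with $\lambda1\in A$. The spectrum of $a\in A$ is $\sigma(a):=\{\lambda\in\mathbb{R}: a-\lambda \text{ is not invertible}\}$, where $b\in A$ is invertible iff there is $d\in A$ with $bd=db=1$. *)

From HB Require Import structures.
From mathcomp Require Import all_boot all_order all_algebra.
From mathcomp Require Import boolp classical_sets reals.
Set Implicit Arguments. Unset Strict Implicit. Unset Printing Implicit Defensive.
Import Order.TTheory GRing.Theory Num.Theory.
Local Open Scope ring_scope.
Local Open Scope classical_set_scope.

Section Synaptic.
Variables (K : realType) (R : algType K).
(* A : the subspace of R; pos : the positive cone A^+ *)
Variables (A pos : R -> Prop).

Definition sle (a b : R) : Prop := pos (b - a).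

Definition comm (a b : R) : Prop := a * b = b * a.
Definition Cset (a : R) (b : R) : Prop := A b /\ comm a b.
Definition CCset (a : R) (b : R) : Prop :=
  A b /\ forall d, Cset a d -> comm b d.

Definition onorm (a : R) : K :=
  inf [set l : K | 0 < l /\ sle (- (l%:A)) a /\ sle a (l%:A)].

Record synaptic : Prop := {
  sub_one : A 1;
  sub_add : forall a b, A a -> A b -> A (a + b);
  sub_scale : forall (t : K) a, A a -> A (t *: a);
  pos_sub : forall a, pos a -> A a;
  pos_add : forall a b, pos a -> pos b -> pos (a + b);
  pos_scale : forall (t : K) a, 0 <= t -> pos a -> pos (t *: a);
  pos_anti : forall a, pos a -> pos (- a) -> a = 0;
  order_unit : forall a, A a -> exists l : K, sle (- (l%:A)) a /\ sle a (l%:A);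
  archimedean : forall a b, A a -> A b ->
      (forall n : nat, sle (a *+ n) b) -> sle a 0;
  SA2 : forall a, A a -> pos (a ^+ 2);
  SA3 : forall a b, pos a -> pos b -> pos (a * b * a);
  SA4 : forall a b, A a -> pos b -> a * b * a = 0 -> a * b = 0 /\ b * a = 0;
  SA5 : forall a, pos a -> exists b, pos b /\ CCset a b /\ b ^+ 2 = a;
  SA6 : forall a, A a -> exists p, A p /\ p * p = p /\
          forall b, A b -> (a * b = 0 <-> p * b = 0);
  SA7 : forall a, A a -> sle 1 a -> exists b, A b /\ a * b = 1 /\ b * a = 1;
  SA8 : forall (a b : R) (s : nat -> R), A a -> A b ->
      (forall n, Cset b (s n)) ->
      (forall n, sle (s n) (s n.+1)) ->
      (forall n m, comm (s n) (s m)) ->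
      (forall e : K, 0 < e -> exists N, forall n, (N <= n)%N -> onorm (a - s n) < e) ->
      Cset b a;
  nondegenerate : (1 : R) <> 0
}.

Definition proj (p : R) : Prop := A p /\ p * p = p.
Definition perp (p : R) : R := 1 - p.

Definition is_meet (p q r : R) : Prop :=
  proj r /\ sle r p /\ sle r q /\
  forall s, proj s -> sle s p -> sle s q -> sle s r.

Definition generic_position (p q : R) : Prop :=
  is_meet p q 0 /\ is_meet p (perp q) 0 /\
  is_meet (perp p) q 0 /\ is_meet (perp p) (perp q) 0.

Definition invertible (b : R) : Prop :=
  exists d, A d /\ b * d = 1 /\ d * b = 1.
Definition spectrum (a : R) : set K :=
  [set l : K | ~ invertible (a - l%:A)].

End Synaptic.

(* Put x := p + q - 1 and y := p - q. Then x y = - y x, x^2 + y^2 = 1 and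
   c^2 = x^2. Since z - t and z + t commute with product z^2 - t^2, the pair
   {t, -t} meets sigma(c) iff it meets sigma(x). Conjugation by y makes
   sigma(x) symmetric: for t^2 <> 1 it turns an inverse of x + t into one of
   x - t, while for t = 1 (resp. t = -1) the meet condition p /\ q = 0
   (resp. p^perp /\ q^perp = 0) shows that invertibility of x + t forces
   invertibility of y^2 = -(x - t)(x + t). Hence
   sigma(p + q) = 1 + sigma(x) = {1 +- g : g in sigma(c)}. *)

From HB Require Import structures.
From mathcomp Require Import all_boot all_order all_algebra.
From mathcomp Require Import boolp classical_sets reals.
From mathcomp Require Import lra.
Import Order.TTheory GRing.Theory Num.Theory.
Local Open Scope ring_scope.
Set Implicit Arguments. Unset Strict Implicit. Unset Printing Implicit Defensive.

(* A reflexive decision procedure for identities in a Z-module, where every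
   non-additive subterm (e.g. a product in a noncommutative algebra) is an
   atom; [ring] does not apply to noncommutative algebras. *)
Inductive zterm := ZVar of nat | ZOpp of zterm | ZAdd of zterm & zterm | ZZero.

Fixpoint zeval (V : zmodType) (e : seq V) (t : zterm) : V :=
  match t with
  | ZVar n => nth 0 e n
  | ZOpp t => - zeval e t
  | ZAdd t u => zeval e t + zeval e u
  | ZZero => 0
  end.

Fixpoint zcoef (t : zterm) (n : nat) : int :=
  match t with
  | ZVar m => ((m == n) : nat)%:Z
  | ZOpp t => - zcoef t n
  | ZAdd t u => zcoef t n + zcoef u n
  | ZZero => 0
  end.

Lemma zeval_sum (V : zmodType) (e : seq V) t :
  zeval e t = \sum_(i < size e) nth 0 e i *~ zcoef t i.
Proof.
elim: t => [n|t IH|t IHt u IHu|] /=.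
- have [hn|hn] := ltnP n (size e).
    rewrite (bigD1 (Ordinal hn)) //= eqxx mulr1z big1 ?addr0 // => i ni.
    by rewrite eq_sym (negbTE (ni : (i : nat) != n)) mulr0z.
  rewrite nth_default // big1 // => i _.
  by rewrite gtn_eqF ?mulr0z // (leq_trans (ltn_ord i) hn).
- by rewrite IH -sumrN; apply: eq_bigr => i _; rewrite mulrNz.
- by rewrite IHt IHu -big_split; apply: eq_bigr => i _; rewrite mulrzDr.
- by rewrite big1 // => i _; rewrite mulr0z.
Qed.

Lemma zeval_eq (V : zmodType) (e : seq V) n t u : size e = n ->
  all (fun i => zcoef t i == zcoef u i) (iota 0 n) -> zeval e t = zeval e u.
Proof.
move=> <- /allP H; rewrite !zeval_sum; apply: eq_bigr => i _.
by rewrite (eqP (H i _)) // mem_iota /= ltn_ord.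
Qed.

Ltac zindex x l :=
  match l with
  | ?y :: _ => constr:(ltac:(unify x y; exact 0%N) : nat)
  | _ :: ?l' => let n := zindex x l' in constr:(S n)
  end.

Ltac zreify t l :=
  match t with
  | 0 => constr:((ZZero, l))
  | ?a + ?b =>
      lazymatch zreify a l with (?ta, ?l1) =>
      lazymatch zreify b l1 with (?tb, ?l2) => constr:((ZAdd ta tb, l2)) end end
  | ?a - ?b =>
      lazymatch zreify a l with (?ta, ?l1) =>
      lazymatch zreify b l1 with (?tb, ?l2) => constr:((ZAdd ta (ZOpp tb), l2)) end end
  | - ?a =>
      lazymatch zreify a l with (?ta, ?l1) => constr:((ZOpp ta, l1)) end
  | _ =>
      match l with
      | _ => let n := zindex t l in constr:((ZVar n, l))
      | _ => let l' := eval cbv [cat] in (l ++ [:: t]) in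
             let n := zindex t l' in constr:((ZVar n, l'))
      end
  end.

Ltac zmodule :=
  lazymatch goal with
  | |- @eq ?V ?a ?b =>
      lazymatch zreify a (@nil V) with (?ta, ?l1) =>
      lazymatch zreify b l1 with (?tb, ?l2) =>
        change (zeval l2 ta = zeval l2 tb);
        let n := eval lazy [size] in (size l2) in
        apply: (@zeval_eq _ l2 n ta tb); [reflexivity | vm_compute; reflexivity]
      end end
  end.

Ltac nc_expand :=
  repeat first [ rewrite mulrDl | rewrite mulrDr | rewrite mulrBl | rewrite mulrBr
               | rewrite mulNr | rewrite mulrN | rewrite mul1r | rewrite mulr1
               | rewrite opprK | rewrite mulrA | rewrite opprD | rewrite opprB
               | rewrite mulr_algl | rewrite mulr_algr | rewrite -scalerAl
               | rewrite -scalerAr | rewrite scalerDr | rewrite scalerBr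
               | rewrite scalerN | rewrite scaleNr | rewrite scalerA ].

Lemma mulr_idemK (T : pzRingType) (e : T) : e * e = e -> forall a, a * e * e = a * e.
Proof. by move=> ee a; rewrite -mulrA ee. Qed.

Ltac idem_simpl ee ff := repeat rewrite (ee, ff, mulr_idemK ee, mulr_idemK ff).

Lemma scale_half_add (K : fieldType) (V : lmodType K) (x : V) :
  (2 != 0 :> K) -> x = 2^-1 *: (x + x).
Proof. by move=> h2; rewrite -mulr2n -scaler_nat scalerA mulVf ?scale1r. Qed.

Section SynapticAlgebra.
Variables (K : realType) (R : algType K) (A pos : R -> Prop).
Hypothesis HA : synaptic A pos.

Let two_neq0 : (2 != 0 :> K). Proof. by rewrite pnatr_eq0. Qed.

Lemma subD a b : A a -> A b -> A (a + b).
Proof. exact: (sub_add HA). Qed.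

Lemma subZ (k : K) a : A a -> A (k *: a).
Proof. exact: (sub_scale HA). Qed.

Lemma posD a b : pos a -> pos b -> pos (a + b).
Proof. exact: (pos_add HA). Qed.

Lemma posZ (k : K) a : 0 <= k -> pos a -> pos (k *: a).
Proof. exact: (pos_scale HA). Qed.

Lemma subN a : A a -> A (- a).
Proof. by move=> h; have := subZ (-1) h; rewrite scaleN1r. Qed.

Lemma subB a b : A a -> A b -> A (a - b).
Proof. by move=> ha hb; apply: subD ha (subN hb). Qed.

Lemma sub_alg (k : K) : A k%:A.
Proof. exact: subZ _ (sub_one HA). Qed.

Lemma sub_sqr a : A a -> A (a * a).
Proof. by move=> h; rewrite -expr2; exact: (pos_sub HA (SA2 HA h)). Qed.

Lemma sub_jordan a b : A a -> A b -> A (a * b + b * a).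
Proof.
move=> ha hb.
have -> : a * b + b * a = (a + b) * (a + b) - a * a - b * b by nc_expand; zmodule.
by do 2?apply: subB; apply: sub_sqr => //; apply: subD ha hb.
Qed.

Lemma sub_sandwich a b : A a -> A b -> A (a * b * a).
Proof.
move=> ha hb; rewrite (scale_half_add (a * b * a) two_neq0).
have -> : a * b * a + a * b * a =
    a * (a * b + b * a) + (a * b + b * a) * a - (a * a * b + b * (a * a)).
  by nc_expand; zmodule.
apply: subZ; apply: subB; first by apply: sub_jordan => //; apply: sub_jordan.
by apply: sub_jordan => //; apply: sub_sqr.
Qed.

Lemma sub_mul_comm a b : A a -> A b -> comm a b -> A (a * b).
Proof.
move=> ha hb ab; rewrite (scale_half_add (a * b) two_neq0) {1}ab.
exact: subZ _ (sub_jordan hb ha).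
Qed.

Lemma pos1 : pos 1.
Proof. by have := SA2 HA (sub_one HA); rewrite expr1n. Qed.

Lemma pos_alg (k : K) : 0 <= k -> pos k%:A.
Proof. by move=> h; apply: posZ h pos1. Qed.

Lemma pos_proj e : proj A e -> pos e.
Proof. by case=> Ae ee; have := SA2 HA Ae; rewrite expr2 ee. Qed.

Lemma proj_perp e : proj A e -> proj A (1 - e).
Proof.
case=> Ae ee; split; first exact: subB (sub_one HA) Ae.
by nc_expand; rewrite ee; zmodule.
Qed.

Lemma sqr_eq0 d : A d -> d * d = 0 -> d = 0.
Proof.
move=> Ad dd; have d1d : d * 1 * d = 0 by rewrite mulr1.
by have [] := SA4 HA Ad pos1 d1d; rewrite mulr1.
Qed.

Lemma pos_mul_comm a b : pos a -> pos b -> comm a b -> pos (a * b).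
Proof.
move=> ha hb ab; have [s [hs [[_ sC] ss]]] := SA5 HA hb.
have sa : comm s a by apply: sC; split; [exact: (pos_sub HA ha) | exact: esym ab].
by rewrite -ss expr2 mulrA -sa; exact: (SA3 HA hs ha).
Qed.

Lemma comm_inverse (a b d : R) : b * d = 1 -> d * b = 1 -> comm a b -> comm a d.
Proof.
move=> bd db ab; rewrite /comm -[a * d]mul1r -db.
by rewrite -mulrA (mulrA b) -ab -!mulrA bd mulr1.
Qed.

Lemma invertible_mul_comm a b : A a -> A b -> comm a b ->
  invertible A (a * b) <-> invertible A a /\ invertible A b.
Proof.
move=> Aa Ab ab; split.
  have factor (u w : R) : A u -> A w -> comm u w -> invertible A (u * w) -> invertible A u.
    move=> Au Aw uw [d [Ad [uwd duw]]].
    have wd : comm w d by apply: comm_inverse uwd duw _; rewrite /comm mulrA -uw.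
    exists (w * d); split; first exact: sub_mul_comm.
    by split; [rewrite mulrA | rewrite wd -mulrA -uw].
  by move=> hab; split; [exact: factor hab | apply: factor Ab Aa _ _; rewrite -?ab].
move=> [[da [Ada [ada daa]]] [db [Adb [bdb dbb]]]].
have bda : comm b da by apply: comm_inverse ada daa _.
have dadb : comm da db by apply: comm_inverse bdb dbb _.
exists (db * da); split; first exact: sub_mul_comm.
by split; rewrite -mulrA; [rewrite (mulrA b) bdb | rewrite (mulrA da) daa]; rewrite mul1r.
Qed.

Lemma invertibleN a : invertible A a -> invertible A (- a).
Proof. by move=> [d [Ad [ad da]]]; exists (- d); rewrite !mulrNN; split=> //; apply: subN. Qed.

Lemma invertible_pos_add a (e : K) : pos a -> 0 < e -> invertible A (a + e%:A).
Proof.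
move=> ha he.
have Ax : A (e^-1 *: a + 1) by apply: subD (subZ _ (pos_sub HA ha)) (sub_one HA).
have ge1 : sle pos 1 (e^-1 *: a + 1).
  by rewrite /sle addrK; apply: posZ ha; rewrite invr_ge0 ltW.
have [b [Ab [xb bx]]] := SA7 HA Ax ge1.
have E : e^-1 *: (a + e%:A) = e^-1 *: a + 1 by rewrite scalerDr scalerA mulVf ?scale1r ?gt_eqF.
exists (e^-1 *: b); split; first exact: subZ _ Ab.
by split; [rewrite -scalerAr scalerAl E | rewrite -scalerAl scalerAr E].
Qed.

(* [u v = 1] and [v <= mu] give [u (mu - v) = mu u - 1 >= 0]. *)
Lemma invertible_pos_ge u : pos u -> invertible A u -> exists2 d : K, 0 < d & pos (u - d%:A).
Proof.
move=> hu [v [Av [uv vu]]].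
have [l [_ hl]] := order_unit HA Av.
pose mu := `|l| + 1.
have mu0 : 0 < mu by have := normr_ge0 l; rewrite /mu; lra.
have hmv : pos (mu%:A - v).
  have -> : mu%:A - v = (l%:A - v) + (mu - l)%:A by rewrite scalerBl; zmodule.
  by apply: posD hl (pos_alg _); have := ler_norm l; rewrite /mu; lra.
have hprod : pos (u * (mu%:A - v)).
  by apply: pos_mul_comm => //; rewrite /comm mulrBr mulrBl uv vu mulr_algr mulr_algl.
exists mu^-1; first by rewrite invr_gt0.
have -> : u - mu^-1%:A = mu^-1 *: (u * (mu%:A - v)).
  by rewrite mulrBr mulr_algr uv scalerBr scalerA mulVf ?scale1r // gt_eqF.
by apply: posZ hprod; rewrite invr_ge0 ltW.
Qed.

Lemma carrier_proj v : A v -> exists e, [/\ proj A e,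
  forall b, A b -> (v * b = 0 <-> e * b = 0), e * v = v
  & forall d, A d -> comm v d -> comm e d].
Proof.
move=> Av; have [e [Ae [ee He]]] := SA6 HA Av.
have A1e : A (1 - e) by apply: subB (sub_one HA) Ae.
have e1e : e * (1 - e) = 0 by rewrite mulrBr mulr1 ee subrr.
have v1e : v * (1 - e) = 0 by apply/(He _ A1e).
have ve : v * e = v by move: v1e; rewrite mulrBr mulr1 => /eqP; rewrite subr_eq0 => /eqP<-.
have ev : e * v = v.
  have Aw : A ((1 - e) * v + v * (1 - e)) by apply: sub_jordan.
  have := sqr_eq0 Aw; rewrite v1e addr0 -mulrA (mulrA v) v1e mul0r mulr0 => /(_ erefl).
  by rewrite mulrBl mul1r => /eqP; rewrite subr_eq0 => /eqP<-.
exists e; split => // d Ad vd.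
pose m := e * d * (1 - e) + (1 - e) * d * e.
have Am : A m.
  have -> : m = (e * d + d * e) - (e * d * e) *+ 2.
    by rewrite /m mulr2n; nc_expand; zmodule.
  by apply: subB; [apply: sub_jordan | rewrite mulr2n; apply: subD; apply: sub_sandwich].
have vm : v * m = 0 by rewrite /m mulrDr !mulrA ve v1e !mul0r addr0 vd -mulrA v1e mulr0.
have edm : e * d * (1 - e) = 0.
  by move/(He _ Am): vm; rewrite /m mulrDr !mulrA ee e1e !mul0r addr0.
have dme : (1 - e) * d * e = 0.
  have mm : m * m = 0.
    by rewrite /m edm add0r !mulrA -(mulrA _ e (1 - e)) e1e mulr0 !mul0r.
  by have := sqr_eq0 Am mm; rewrite /m edm add0r.
move/eqP: edm; rewrite mulrBr mulr1 subr_eq0 => /eqP h1.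
move/eqP: dme; rewrite !mulrBl mul1r subr_eq0 => /eqP h2.
by rewrite /comm h1 h2.
Qed.

Lemma pos_orthogonal_summand u v s : A u -> A v -> pos s ->
  v * u = 0 -> u + v = s -> comm s v -> pos u.
Proof.
move=> Au Av hs vu uvs sv.
have [e [he He ev eC]] := carrier_proj Av.
have [Ae ee] := he.
have eu : e * u = 0 by apply/(He _ Au).
have es : comm e s by apply: eC (pos_sub HA hs) (esym sv).
have h1 : (1 - e) * s = u by rewrite -uvs mulrBl mul1r mulrDr eu ev add0r addrK.
have c1 : s * (1 - e) = (1 - e) * s by rewrite mulrBr mulrBl mulr1 mul1r es.
have [_ e2] := proj_perp he.
have <- : (1 - e) * s * (1 - e) = u by rewrite -mulrA c1 mulrA e2 h1.
exact: (SA3 HA (pos_proj (proj_perp he)) hs).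
Qed.

(* [u = |a| + a] and [v = |a| - a] are twice the positive and negative
   parts of [a]. *)
Lemma jordan_decomposition a : A a -> exists u v,
  [/\ A u, pos u, pos v, u * v = 0 & a *+ 2 = u - v] /\
  forall d, A d -> comm a d -> comm u d.
Proof.
move=> Aa; have [s [hs [[As sC] ss]]] := SA5 HA (SA2 HA Aa).
have sd d : A d -> comm a d -> comm s d.
  move=> Ad ad; apply: sC; split => //.
  by rewrite /comm expr2 -mulrA ad mulrA ad -mulrA.
have sa := sd a Aa erefl.
have {}ss : s * s = a * a by rewrite -!expr2.
have Au : A (s + a) by apply: subD.
have Av : A (s - a) by apply: subB.
have hS : pos (s + s) by apply: posD.
have uv : (s + a) * (s - a) = 0 by nc_expand; rewrite sa ss; zmodule.
have vu : (s - a) * (s + a) = 0 by nc_expand; rewrite sa ss; zmodule.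
exists (s + a), (s - a); split; last first.
  by move=> d Ad ad; rewrite /comm mulrDl mulrDr (sd d Ad ad) ad.
split=> //; last by rewrite mulr2n; zmodule.
  apply: (pos_orthogonal_summand Au Av hS vu); first by zmodule.
  by rewrite /comm; nc_expand; rewrite sa; zmodule.
apply: (pos_orthogonal_summand Av Au hS uv); first by zmodule.
by rewrite /comm; nc_expand; rewrite sa; zmodule.
Qed.

(* [(u P^perp)^2 = u^2 P^perp = 2 u (a P^perp)] is both positive and negative. *)
Lemma mul_perp_eq0 u a v P : A u -> A a -> proj A P -> pos u ->
  comm u a -> comm u P -> u * v = 0 -> a *+ 2 = u - v ->
  pos (- (a * (1 - P))) -> u * (1 - P) = 0.
Proof.
move=> Au Aa hP hu ua uP uv a2 ha.
have [A1P e2] := proj_perp hP.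
have u1P : comm u (1 - P) by rewrite /comm mulrBr mulrBl mulr1 mul1r uP.
have At : A (u * (1 - P)) by apply: sub_mul_comm.
have sq : u * (1 - P) * (u * (1 - P)) = u * u * (1 - P).
  by rewrite mulrA -(mulrA u) -u1P mulrA -mulrA e2.
have E : (u * (a * (1 - P))) *+ 2 = u * (1 - P) * (u * (1 - P)).
  by rewrite sq mulrA -mulrnAl -mulrnAr a2 (mulrBr u) uv subr0.
have cm : comm u (- (a * (1 - P))).
  by rewrite /comm mulrN mulNr mulrA ua -mulrA u1P mulrA.
have hp : pos (u * (1 - P) * (u * (1 - P))) by rewrite -expr2; exact: (SA2 HA At).
have hn : pos (- (u * (1 - P) * (u * (1 - P)))).
  by rewrite -E mulr2n opprD -mulrN; apply: posD; apply: pos_mul_comm.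
exact: sqr_eq0 At (pos_anti HA hp hn).
Qed.

Lemma eq0_of_meet0 u P Q : A u -> proj A P -> proj A Q -> comm u P -> comm u Q ->
  u * (1 - P) = 0 -> u * (1 - Q) = 0 -> is_meet A pos P Q 0 -> u = 0.
Proof.
move=> Au hP hQ uP uQ uP0 uQ0 [_ [_ [_ meet]]].
have [f [hf Hf _ fC]] := carrier_proj Au.
have [Af ff] := hf.
have f_le X : proj A X -> comm u X -> u * (1 - X) = 0 -> sle pos f X.
  move=> [AX XX] uX uX0.
  have /eqP : f * (1 - X) = 0 by apply/(Hf _ (subB (sub_one HA) AX)).
  rewrite mulrBr mulr1 subr_eq0 => /eqP fX.
  have Xf : X * f = f by rewrite -(fC X AX uX) -fX.
  apply: pos_proj; split; first exact: subB.
  by nc_expand; rewrite XX ff -fX Xf; zmodule.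
have f0 : f = 0.
  apply: (pos_anti HA (pos_proj hf)).
  by have := meet f hf (f_le P hP uP uP0) (f_le Q hQ uQ uQ0); rewrite /sle sub0r.
by rewrite -[u]mulr1; apply/(Hf _ (sub_one HA)); rewrite f0 mul0r.
Qed.

(* The positive part of [a] is killed by [P^perp] and [Q^perp], so its
   carrier lies below both [P] and [Q]. *)
Lemma pos_opp_of_meet0 a P Q : A a -> proj A P -> proj A Q -> comm a P -> comm a Q ->
  pos (- (a * (1 - P))) -> pos (- (a * (1 - Q))) -> is_meet A pos P Q 0 -> pos (- a).
Proof.
move=> Aa hP hQ aP aQ haP haQ meet.
have [u [v [[Au hu hv uv a2] uC]]] := jordan_decomposition Aa.
have ua := uC a Aa erefl.
have uP : comm u P := uC P (proj1 hP) aP.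
have uQ : comm u Q := uC Q (proj1 hQ) aQ.
have u0 : u = 0.
  apply: (eq0_of_meet0 Au hP hQ uP uQ _ _ meet).
    exact: mul_perp_eq0 Au Aa hP hu ua uP uv a2 haP.
  exact: mul_perp_eq0 Au Aa hQ hu ua uQ uv a2 haQ.
rewrite (scale_half_add (- a) two_neq0) -opprD -mulr2n a2 u0 sub0r opprK.
by apply: posZ hv; rewrite invr_ge0 ler0n.
Qed.

(* With [P /\ Q = 0] and [P + Q >= d > 0], apply the previous lemma to
   [a := d - (P - Q)^2]: it gives [(P - Q)^2 >= d]. *)
Lemma invertible_sqr_sub_of_meet0 P Q : proj A P -> proj A Q -> is_meet A pos P Q 0 ->
  invertible A (P + Q) -> invertible A ((P - Q) * (P - Q)).
Proof.
move=> hP hQ meet hinv; have [AP PP] := hP; have [AQ QQ] := hQ.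
have [d d0 hd] := invertible_pos_ge (posD (pos_proj hP) (pos_proj hQ)) hinv.
set w := (P - Q) * (P - Q).
have Aa : A (d%:A - w) by apply: subB (sub_alg d) (sub_sqr (subB AP AQ)).
have aP : comm (d%:A - w) P.
  by rewrite /comm /w; nc_expand; idem_simpl PP QQ; zmodule.
have aQ : comm (d%:A - w) Q.
  by rewrite /comm /w; nc_expand; idem_simpl PP QQ; zmodule.
have sandwich X : proj A X -> pos ((1 - X) * (P + Q - d%:A) * (1 - X)).
  by move=> hX; exact: (SA3 HA (pos_proj (proj_perp hX)) hd).
have aP_neg : pos (- ((d%:A - w) * (1 - P))).
  suff -> : - ((d%:A - w) * (1 - P)) = (1 - P) * (P + Q - d%:A) * (1 - P) by exact: sandwich.
  by rewrite /w; nc_expand; idem_simpl PP QQ; zmodule.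
have aQ_neg : pos (- ((d%:A - w) * (1 - Q))).
  suff -> : - ((d%:A - w) * (1 - Q)) = (1 - Q) * (P + Q - d%:A) * (1 - Q) by exact: sandwich.
  by rewrite /w; nc_expand; idem_simpl PP QQ; zmodule.
have := pos_opp_of_meet0 Aa hP hQ aP aQ aP_neg aQ_neg meet.
by rewrite opprB => hw; have := invertible_pos_add hw d0; rewrite subrK.
Qed.

(* [y (x + s)^-1 y - (x + s)] inverts [x - s] up to the factor [s^2 - 1]. *)
Lemma invertible_reflect x y (s : K) : A x -> A y -> x * y = - (y * x) ->
  y * y = 1 - x * x -> s * s != 1 -> invertible A (x + s%:A) -> invertible A (x - s%:A).
Proof.
move=> Ax Ay xy yy s1 [v [Av [xv vx]]].
have F1 : (x - s%:A) * y = - (y * (x + s%:A)) by nc_expand; rewrite xy; zmodule.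
have F2 : y * (x - s%:A) = - ((x + s%:A) * y) by nc_expand; rewrite xy; zmodule.
have F3 : (x - s%:A) * (x + s%:A) = x * x - (s * s)%:A by nc_expand; zmodule.
have F4 : (x + s%:A) * (x - s%:A) = x * x - (s * s)%:A by nc_expand; zmodule.
have G1 : (x - s%:A) * (y * v * y) = x * x - 1.
  by rewrite !mulrA F1 !mulNr -(mulrA y) xv mulr1 yy opprB.
have G2 : (y * v * y) * (x - s%:A) = x * x - 1.
  by rewrite -!mulrA F2 !mulrN (mulrA v) vx mul1r yy opprB.
have ss : s * s - 1 != 0 by rewrite subr_eq0.
set w := y * v * y - (x + s%:A).
have H1 : (x - s%:A) * w = (s * s - 1)%:A by rewrite mulrBr G1 F3 scalerBl scale1r; zmodule.
have H2 : w * (x - s%:A) = (s * s - 1)%:A by rewrite mulrBl G2 F4 scalerBl scale1r; zmodule.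
exists ((s * s - 1)^-1 *: w); split.
  apply: subZ; apply: subB (sub_sandwich Ay Av) _.
  exact: subD Ax (sub_alg s).
by split; [rewrite -scalerAr H1 | rewrite -scalerAl H2]; rewrite scalerA mulVf ?scale1r.
Qed.

Lemma invertible_pm_sqr z w (t : K) : A z -> A w -> z * z = w * w ->
  invertible A (z - t%:A) /\ invertible A (z + t%:A) ->
  invertible A (w - t%:A) /\ invertible A (w + t%:A).
Proof.
move=> Az Aw zw.
have fac (u : R) : (u - t%:A) * (u + t%:A) = u * u - (t * t)%:A by nc_expand; zmodule.
have pm (u : R) : A u -> invertible A ((u - t%:A) * (u + t%:A)) <->
    invertible A (u - t%:A) /\ invertible A (u + t%:A).
  move=> Au; apply: invertible_mul_comm; first exact: subB Au (sub_alg t).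
    exact: subD Au (sub_alg t).
  by rewrite /comm; nc_expand; zmodule.
by move=> /(pm z Az) ; rewrite fac zw -fac => /(pm w Aw).
Qed.

Section GenericPair.
Variables p q : R.
Hypotheses (hp : proj A p) (hq : proj A q).
Hypotheses (meet_pq : is_meet A pos p q 0) (meet_perp : is_meet A pos (1 - p) (1 - q) 0).

Local Notation x := (p + q - 1).
Local Notation y := (p - q).

Let Ax : A x. Proof. exact: subB (subD (proj1 hp) (proj1 hq)) (sub_one HA). Qed.

Lemma sandwich_sum_sqr : p * q * p + (1 - p) * (1 - q) * (1 - p) = x * x.
Proof. by have [_ pp] := hp; have [_ qq] := hq; nc_expand; idem_simpl pp qq; zmodule. Qed.

Lemma anticomm_sub_add : x * y = - (y * x).
Proof. by have [_ pp] := hp; have [_ qq] := hq; nc_expand; idem_simpl pp qq; zmodule. Qed.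

Lemma sqr_sub_add : y * y = 1 - x * x.
Proof. by have [_ pp] := hp; have [_ qq] := hq; nc_expand; idem_simpl pp qq; zmodule. Qed.

(* [x + 1 = p + q] and [-(x - 1) = p^perp + q^perp]. *)
Lemma invertible_sqr_sub_pq (t : K) : t * t = 1 ->
  invertible A (x + t%:A) -> invertible A (y * y).
Proof.
move=> t1; have [t_eq | t_eq] : t = 1 \/ t = -1.
  by move/eqP: t1; rewrite -expr2 sqrf_eq1 => /orP[] /eqP; [left | right].
  have -> : t%:A = 1 :> R by rewrite t_eq; exact: scale1r.
  by rewrite subrK; apply: invertible_sqr_sub_of_meet0.
have -> : t%:A = -1 :> R by rewrite t_eq; exact: scaleN1r.
move/invertibleN; rewrite (_ : - (x + -1) = (1 - p) + (1 - q)); last by zmodule.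
move/(invertible_sqr_sub_of_meet0 (proj_perp hp) (proj_perp hq) meet_perp).
by rewrite (_ : 1 - p - (1 - q) = - y) ?mulrNN //; zmodule.
Qed.

Lemma invertible_reflect_pq (t : K) : invertible A (x + t%:A) -> invertible A (x - t%:A).
Proof.
have Ay : A y by apply: subB (proj1 hp) (proj1 hq).
have [t1 hxt|t1] := eqVneq (t * t) 1; last first.
  exact: (invertible_reflect Ax Ay anticomm_sub_add sqr_sub_add t1).
have /invertibleN := invertible_sqr_sub_pq t1 hxt.
have -> : - (y * y) = (x - t%:A) * (x + t%:A).
  by rewrite sqr_sub_add; nc_expand; rewrite t1 scale1r; zmodule.
case/invertible_mul_comm => //; first exact: subB Ax (sub_alg t).
  exact: subD Ax (sub_alg t).
by rewrite /comm; nc_expand; zmodule.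
Qed.

Lemma invertible_sym_pq (t : K) : invertible A (x + t%:A) <-> invertible A (x - t%:A).
Proof.
split=> [|h]; first exact: invertible_reflect_pq.
by move: (@invertible_reflect_pq (- t)); rewrite !scaleNr opprK; apply.
Qed.

End GenericPair.

End SynapticAlgebra.

Theorem theorem8p1 (K : realType) (R : algType K) (A pos : R -> Prop)
    (HA : synaptic A pos) (p q c : R) :
  proj A p -> proj A q -> generic_position A pos p q ->
  (* c = (p q p + p^perp q^perp p^perp)^(1/2): the (unique) positive square root in A *)
  A c -> pos c -> c ^+ 2 = p * q * p + perp p * perp q * perp p ->
  forall l : K,
    spectrum A (p + q) l <->
    exists2 g : K, spectrum A c g & (l = 1 + g \/ l = 1 - g).
Proof.
move=> hp hq [meet_pq [_ [_ meet_perp]]] Ac _ hc l.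
have Ax : A (p + q - 1) := subB HA (subD HA (proj1 hp) (proj1 hq)) (sub_one HA).
have cx : c * c = (p + q - 1) * (p + q - 1) by rewrite -expr2 hc; exact: (sandwich_sum_sqr hp hq).
have sym t := invertible_sym_pq HA hp hq meet_pq meet_perp t.
set x := p + q - 1 in Ax cx sym *.
rewrite /spectrum /= (_ : p + q - l%:A = x - (l - 1)%:A); last first.
  by rewrite /x scalerBl scale1r; zmodule.
split=> [nx | [g ng hl]].
- set t := l - 1 in nx *.
  have [c1 | nc1] := pselect (invertible A (c - t%:A)); last by exists t; [|left; rewrite /t; lra].
  have [c2 | nc2] := pselect (invertible A (c + t%:A)).
    by case: (invertible_pm_sqr HA Ac Ax cx (conj c1 c2)).
  by exists (- t); [rewrite /spectrum /= scaleNr opprK | right; rewrite /t; lra].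
- have nxg : ~ invertible A (x - g%:A).
    by move=> h; apply: ng; case: (invertible_pm_sqr HA Ax Ac (esym cx) (conj h (proj2 (sym g) h))).
  case: hl => ->; first by rewrite (_ : 1 + g - 1 = g) //; lra.
  by rewrite (_ : 1 - g - 1 = - g) ?scaleNr ?opprK; [move/(sym g) | lra].
Qed.
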